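(* Let $\boldsymbol\gamma=(\gamma_1,\dots,\gamma_d,\gamma_{d+1})\in\mathbb R^{d+1}$ with $\gamma_i=-1$ for some $i$, $1\le i\le d$, and let $\mathbf n\in\mathbb N_0^d$ with $n_i\ge1$. Then $$P_{\mathbf n}^{(\gamma,\gamma_{d+1})}(x)=-(|\mathbf n|+\gamma_{d+1})\,x_i\,P_{\mathbf n-e_i}^{(\gamma+2e_i,\gamma_{d+1})}(x),$$ where $\gamma=(\gamma_1,\dots,\gamma_d)$.
   Context: $|x|=x_1+\dots+x_d$, $|\mathbf n|=n_1+\dots+n_d$, $e_i$ the standard basis of $\mathbb R^d$. For $(\gamma,\gamma_{d+1})\in\mathbb R^{d+1}$ and $\mathbf n\in\mathbb N_0^d$, on the interior of $T^d=\{x_i\ge0,|x|\le1\}$, $P_{\mathbf n}^{(\gamma,\gamma_{d+1})}(x)=x_1^{-\gamma_1}\cdots x_d^{-\gamma_d}(1-|x|)^{-\gamma_{d+1}}\frac{\partial^{|\mathbf n|}}{\partial x_1^{n_1}\cdots\partial x_d^{n_d}}\big[x_1^{\gamma_1+n_1}\cdots x_d^{\gamma_d+n_d}(1-|x|)^{\gamma_{d+1}+|\mathbf n|}\big]$. *)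

From HB Require Import structures.
From mathcomp Require Import all_boot all_order all_algebra.
From mathcomp Require Import all_classical all_reals all_analysis.
Set Implicit Arguments. Unset Strict Implicit. Unset Printing Implicit Defensive.
Import Order.TTheory GRing.Theory Num.Theory.
Import numFieldNormedType.Exports.
Local Open Scope ring_scope.

Section Defs.
Variables (R : realType) (d : nat).

Definition absx (x : 'rV[R]_d) : R := \sum_(j < d) x ord0 j.
Definition absn (n : 'I_d -> nat) : nat := (\sum_(j < d) n j)%N.

Definition evec (i : 'I_d) : 'rV[R]_d := delta_mx ord0 i.

Definition partial (i : 'I_d) (f : 'rV[R]_d -> R) : 'rV[R]_d -> R :=
  fun x => 'D_(evec i) f x.

Definition partialn (n : 'I_d -> nat) (f : 'rV[R]_d -> R) : 'rV[R]_d -> R :=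
  foldr (fun j g => iter (n j) (partial j) g) f (enum 'I_d).

Definition in_interior (x : 'rV[R]_d) : Prop :=
  (forall j, 0 < x ord0 j) /\ absx x < 1.

Definition jac_weight (gam : 'rV[R]_d) (gd1 : R) (n : 'I_d -> nat)
  (x : 'rV[R]_d) : R :=
  (\prod_(j < d) (x ord0 j) `^ (gam ord0 j + (n j)%:R)) *
  (1 - absx x) `^ (gd1 + (absn n)%:R).

Definition Pjac (gam : 'rV[R]_d) (gd1 : R) (n : 'I_d -> nat)
  (x : 'rV[R]_d) : R :=
  (\prod_(j < d) (x ord0 j) `^ (- gam ord0 j)) * (1 - absx x) `^ (- gd1) *
  partialn n (jac_weight gam gd1 n) x.

Definition nsub (n : 'I_d -> nat) (i : 'I_d) : 'I_d -> nat :=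
  fun j => if j == i then (n j).-1 else n j.

End Defs.

From Stdlib Require Morphisms.
From HB Require Import structures.
From mathcomp Require Import all_boot all_order all_algebra.
From mathcomp Require Import all_classical all_reals all_analysis.
From mathcomp Require Import ring.
Import Order.TTheory GRing.Theory Num.Theory.
Import numFieldNormedType.Exports.
Local Open Scope ring_scope.
Set Implicit Arguments. Unset Strict Implicit. Unset Printing Implicit Defensive.

(* Since gamma_i = -1, the weight is W = x_i^k g with k = n_i - 1, where
   g = x^(gamma + n - k e_i) (1 - |x|)^(gamma_{d+1} + |n|) has exponent 0 in x_i.
   The one-variable identity x D^(k+1) (x^k g) = D^k (x^(k+1) D g), proved by
   induction on k from the commutation of the Euler operator x D with D^k x^k,
   turns x_i D_i^(n_i) W into D_i^(n_i - 1) (x_i^(k+1) D_i g), and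
   x_i^(k+1) D_i g = -(gamma_{d+1} + |n|) W' where W' is the weight for
   (gamma + 2 e_i, n - e_i).  The other partial derivatives commute with D_i and
   with multiplication by powers of x_i.  All functions involved are finite sums
   of monomials c x^a (1 - |x|)^m, so the derivatives are computed formally on
   lists of such monomials, which agree with the analytic ones on the open
   simplex. *)

Lemma is_derive_line (R : numFieldType) (V : normedModType R) (f : V -> R)
    (x v : V) (df : R) :
  is_derive (0 : R) 1 (fun t : R => f (t *: v + x)) df -> is_derive x v f df.
Proof.
have E : (fun h : R => h^-1 *: ((f \o shift x) (h *: v) - f x)) =
  (fun h : R => h^-1 *: (((fun t : R => f (t *: v + x)) \o shift 0) (h *: 1)
                          - f (0 *: v + x))).
  by apply/funext => h /=; rewrite scale0r add0r addr0 -[h%:A]/(h * 1) mulr1.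
by case=> ? ?; split; rewrite /derivable /derive E.
Qed.

Lemma is_derive_powR_line (R : realType) (p q a m : R) : 0 < p -> 0 < q ->
  is_derive (0 : R) 1 (fun t : R => (t + p) `^ a * (q - t) `^ m)
    (a * p `^ (a - 1) * q `^ m - m * q `^ (m - 1) * p `^ a).
Proof.
move=> p0 q0.
have p0' : 0 < shift p 0 by rewrite /= add0r.
have q0' : 0 < q - 0 by rewrite subr0.
have Dp := is_derive1_comp (is_derive1_powR a p0') (is_derive_shift 0 1 p).
have Dq := is_derive1_comp (g := cst q - id) (is_derive1_powR m q0')
  (is_deriveB (is_derive_cst q (0 : R) 1) (is_derive_id (0 : R) 1)).
have -> : (fun t : R => (t + p) `^ a * (q - t) `^ m) =
          (@powR R ^~ a \o shift p) * (@powR R ^~ m \o (cst q - id)) by [].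
apply: (is_derive_eq (is_deriveM Dp Dq)).
by rewrite /= !fctE add0r !subr0 /GRing.scale /=; ring.
Qed.

Section SimplexMonomial.
Variables (R : realType) (d : nat).
Implicit Types (a : 'rV[R]_d) (m s t : R) (x y : 'rV[R]_d) (j k : 'I_d).

Lemma near_in_interior x : in_interior x -> \forall y \near x, in_interior y.
Proof.
case=> x_gt0 absx_lt1.
have coord_gt0 j : \forall y \near x, 0 < (y : 'rV[R]_d) ord0 j.
  apply: (@coord_continuous R 1 d ord0 j x [set r : R | 0 < r]%classic).
  by apply: open_nbhs_nbhs; split; [exact: open_gt | exact: x_gt0].
have absx_cont : continuous (@absx R d).
  move=> y; apply: differentiable_continuous.
  have -> : @absx R d = \sum_(j < d) (fun y : 'rV[R]_d => y ord0 j).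
    by apply/funext => z; rewrite /absx fct_sumE.
  by apply: differentiable_sum => j; exact: differentiable_coord.
have : \forall y \near x, absx (y : 'rV[R]_d) < 1.
  apply: (absx_cont x [set r : R | r < 1]%classic).
  by apply: open_nbhs_nbhs; split; [exact: open_lt | exact: absx_lt1].
by apply: filter_app; near=> y => ?; split=> //; near: y; exact: filter_forall.
Unshelve. all: by end_near. Qed.

Definition smono a m x : R :=
  (\prod_(j < d) x ord0 j `^ a ord0 j) * (1 - absx x) `^ m.

Lemma addr_evecE a s k j : (a + s *: evec R k) ord0 j = a ord0 j + s * (j == k)%:R.
Proof. by rewrite !mxE eqxx. Qed.

Lemma absx_line t k x : absx (t *: evec R k + x) = t + absx x.
Proof.
rewrite /absx; under eq_bigr do rewrite !mxE eqxx andTb.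
rewrite big_split /= (bigD1 k) //= eqxx mulr1 big1 ?addr0 // => j /negbTE ->.
by rewrite mulr0.
Qed.

Lemma smono_split k a m x :
  smono a m x = (\prod_(j < d | j != k) x ord0 j `^ a ord0 j) *
                (x ord0 k `^ a ord0 k * (1 - absx x) `^ m).
Proof. by rewrite /smono (bigD1 k) //=; ring. Qed.

Lemma smono_line k a m x t :
  smono a m (t *: evec R k + x) =
  (\prod_(j < d | j != k) x ord0 j `^ a ord0 j) *
  ((t + x ord0 k) `^ a ord0 k * (1 - absx x - t) `^ m).
Proof.
rewrite (smono_split k) absx_line !mxE eqxx andTb eqxx mulr1.
rewrite (eq_bigr (fun j => x ord0 j `^ a ord0 j)) => [|j /negbTE jk].
  by rewrite opprD addrA addrAC.
by rewrite !mxE eqxx jk mulr0 add0r.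
Qed.

Lemma prod_offk_evec k a s x :
  \prod_(j < d | j != k) x ord0 j `^ (a + s *: evec R k) ord0 j =
  \prod_(j < d | j != k) x ord0 j `^ a ord0 j.
Proof. by apply: eq_bigr => j /negbTE jk; rewrite addr_evecE jk mulr0 addr0. Qed.

Lemma smono_shift k a m s x : in_interior x ->
  smono (a + s *: evec R k) m x = x ord0 k `^ s * smono a m x.
Proof.
case=> x_gt0 _; rewrite !(smono_split k) prod_offk_evec addr_evecE eqxx mulr1.
by rewrite powRD ?(gt_eqF (x_gt0 k)) ?implybT //; ring.
Qed.

Lemma is_derive_smono k a m x : in_interior x ->
  is_derive x (evec R k) (smono a m)
    (a ord0 k * smono (a - evec R k) m x - m * smono a (m - 1) x).
Proof.
case=> x_gt0 absx_lt1; apply: is_derive_line.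
have s_gt0 : 0 < 1 - absx x by rewrite subr_gt0.
under eq_fun do rewrite smono_line.
set P := \prod_(j < d | j != k) _.
apply: (is_derive_eq (is_deriveZ P
  (is_derive_powR_line (a ord0 k) m (x_gt0 k) s_gt0))).
rewrite (smono_split k (a - _)) (smono_split k a) -/P.
rewrite (eq_bigr (fun j => x ord0 j `^ a ord0 j)) => [|j /negbTE jk]; last first.
  by rewrite !mxE eqxx jk subr0.
by rewrite -/P !mxE eqxx /GRing.scale /= eqxx; ring.
Qed.

End SimplexMonomial.

Section MonomialSums.
Variables (R : realType) (d : nat).
Implicit Types (a : 'rV[R]_d) (c m s t : R) (x y : 'rV[R]_d) (j k : 'I_d).

(* [MTerm c a m] stands for x |-> c x^a (1 - |x|)^m, a list for the sum of its terms. *)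
Record mterm := MTerm { coef : R; xexp : 'rV[R]_d; sexp : R }.
Implicit Types (p : mterm) (L : seq mterm) (n : 'I_d -> nat) (r : seq 'I_d).

Definition teval L x : R := \sum_(p <- L) coef p * smono (xexp p) (sexp p) x.

Fixpoint tderiv k L : seq mterm :=
  if L is p :: L' then
    MTerm (coef p * xexp p ord0 k) (xexp p - evec R k) (sexp p)
    :: MTerm (- (coef p * sexp p)) (xexp p) (sexp p - 1) :: tderiv k L'
  else [::].

Definition tderivs n r L : seq mterm := foldr (fun j => iter (n j) (tderiv j)) L r.

Definition tshift k s L : seq mterm :=
  [seq MTerm (coef p) (xexp p + s *: evec R k) (sexp p) | p <- L].

Definition tscale c L : seq mterm := [seq MTerm (c * coef p) (xexp p) (sexp p) | p <- L].

Definition teq L1 L2 : Prop := forall x, in_interior x -> teval L1 x = teval L2 x.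

(* Otherwise the morphism search of generalized rewriting unfolds these, which
   is very slow. *)
#[export] Typeclasses Opaque teval tderiv tderivs tshift tscale teq.

Notation teq_morphism f := (Morphisms.Proper (Morphisms.respectful teq teq) f).

Lemma teval_cons p L x :
  teval (p :: L) x = coef p * smono (xexp p) (sexp p) x + teval L x.
Proof. by rewrite /teval big_cons. Qed.

Lemma teval_cat L1 L2 x : teval (L1 ++ L2) x = teval L1 x + teval L2 x.
Proof. by rewrite /teval big_cat. Qed.

Lemma teval_tscale c L x : teval (tscale c L) x = c * teval L x.
Proof. by rewrite /teval big_map mulr_sumr; apply: eq_bigr => p _ /=; rewrite mulrA. Qed.

Lemma teval_tshift k s L x : in_interior x ->
  teval (tshift k s L) x = x ord0 k `^ s * teval L x.
Proof.
move=> Ux; rewrite /teval big_map mulr_sumr; apply: eq_bigr => p _ /=.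
by rewrite smono_shift // mulrCA.
Qed.

Lemma is_derive_teval k L x : in_interior x ->
  is_derive x (evec R k) (teval L) (teval (tderiv k L) x).
Proof.
move=> Ux; elim: L => [|p L IH].
  have -> : teval [::] = cst 0 by apply/funext => y; rewrite /teval big_nil.
  exact: is_derive_cst.
have -> : teval (p :: L) = coef p \*: smono (xexp p) (sexp p) + teval L.
  by apply/funext => y; rewrite teval_cons.
apply: (is_derive_eq (is_deriveD (is_deriveZ (coef p) (is_derive_smono k _ _ Ux)) IH)).
by rewrite /= !teval_cons /GRing.scale /=; ring.
Qed.

Lemma partial_teval k L x : in_interior x -> partial k (teval L) x = teval (tderiv k L) x.
Proof. by move=> Ux; rewrite /partial; have [_ ->] := is_derive_teval k L Ux. Qed.

Lemma partial_local k (f g : 'rV[R]_d -> R) x :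
  (forall y, in_interior y -> f y = g y) -> in_interior x ->
  partial k f x = partial k g x.
Proof.
move=> fg Ux; apply: near_eq_derive.
by apply: filterS (near_in_interior Ux) => y Uy; exact: fg.
Qed.

Lemma partialn_teval n (f : 'rV[R]_d -> R) L x :
  (forall y, in_interior y -> f y = teval L y) -> in_interior x ->
  partialn n f x = teval (tderivs n (enum 'I_d) L) x.
Proof.
rewrite /partialn /tderivs => fL; move: x; elim: (enum 'I_d) => //= j r IH.
elim: (n j) => //= N IHN x Ux.
by rewrite (partial_local j IHN Ux) partial_teval.
Qed.

#[export] Instance teq_Equivalence : RelationClasses.Equivalence teq.
Proof.
split=> [L x _ | L1 L2 E x Ux | L1 L2 L3 E1 E2 x Ux] //; first by rewrite E.
by rewrite E1 // E2.
Qed.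

#[export] Instance cat_teq :
  Morphisms.Proper (Morphisms.respectful teq (Morphisms.respectful teq teq)) (@cat mterm).
Proof. by move=> L1 L2 E1 L3 L4 E2 x Ux; rewrite !teval_cat E1 // E2. Qed.

#[export] Instance tscale_teq c : teq_morphism (tscale c).
Proof. by move=> L1 L2 E x Ux; rewrite !teval_tscale E. Qed.

#[export] Instance tshift_teq k s : teq_morphism (tshift k s).
Proof. by move=> L1 L2 E x Ux; rewrite !teval_tshift // E. Qed.

#[export] Instance tderiv_teq k : teq_morphism (tderiv k).
Proof. by move=> L1 L2 E x Ux; rewrite -!partial_teval //; exact: partial_local. Qed.

#[export] Instance iter_teq N (f : seq mterm -> seq mterm) :
  teq_morphism f -> teq_morphism (iter N f).
Proof. by move=> f_teq; elim: N => //= N IH L1 L2 E; apply: f_teq; exact: IH. Qed.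

#[export] Instance tderivs_teq n r : teq_morphism (tderivs n r).
Proof. by elim: r => //= j r IH L1 L2 E; apply: iter_teq; exact: IH. Qed.

Lemma teq_catC L1 L2 : teq (L1 ++ L2) (L2 ++ L1).
Proof. by move=> x _; rewrite !teval_cat addrC. Qed.

Lemma tshift_cat k s L1 L2 : tshift k s (L1 ++ L2) = tshift k s L1 ++ tshift k s L2.
Proof. exact: map_cat. Qed.

Lemma tshift_tshift k s t L : tshift k s (tshift k t L) = tshift k (t + s) L.
Proof. by rewrite /tshift -map_comp; apply: eq_map => p /=; rewrite scalerDl addrA. Qed.

Lemma tshift_tscale k s c L : tshift k s (tscale c L) = tscale c (tshift k s L).
Proof. by rewrite /tshift /tscale -!map_comp. Qed.

Lemma tshift0 k L : teq (tshift k 0 L) L.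
Proof. by move=> x Ux; rewrite teval_tshift // powRr0 mul1r. Qed.

Lemma tderiv_cat k L1 L2 : tderiv k (L1 ++ L2) = tderiv k L1 ++ tderiv k L2.
Proof. by elim: L1 => //= p L1 ->. Qed.

Lemma tderiv_tscale k c L : teq (tderiv k (tscale c L)) (tscale c (tderiv k L)).
Proof.
move=> x _; elim: L => //= p L IH.
by rewrite !teval_cons IH /= !teval_tscale; ring.
Qed.

Lemma tderiv_tshift_neq j k s L : j != k ->
  tderiv j (tshift k s L) = tshift k s (tderiv j L).
Proof.
move=> jk; elim: L => //= p L ->.
by rewrite addr_evecE (negbTE jk) mulr0 addr0 addrAC.
Qed.

Lemma tderiv_tshift k s L :
  teq (tderiv k (tshift k s L))
      (tscale s (tshift k (s - 1) L) ++ tshift k s (tderiv k L)).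
Proof.
move=> x _; elim: L => //= p L IH.
rewrite !teval_cons IH !teval_cat /= !teval_cons /= addr_evecE eqxx mulr1.
have -> : xexp p + s *: evec R k - evec R k = xexp p + (s - 1) *: evec R k.
  by rewrite scalerBl scale1r addrA.
have -> : xexp p - evec R k + s *: evec R k = xexp p + (s - 1) *: evec R k.
  by rewrite scalerBl scale1r addrA addrAC.
ring.
Qed.

Lemma tderivC j k L : j != k -> teq (tderiv j (tderiv k L)) (tderiv k (tderiv j L)).
Proof.
move=> jk x _; elim: L => //= p L IH.
rewrite !teval_cons IH /= !mxE !eqxx (negbTE jk) eq_sym (negbTE jk) !subr0.
by rewrite [xexp p - evec R k - evec R j]addrAC; ring.
Qed.

Lemma tderivs_cat n r1 r2 L : tderivs n (r1 ++ r2) L = tderivs n r1 (tderivs n r2 L).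
Proof. exact: foldr_cat. Qed.

Lemma tderivs_tshift n r k s L : k \notin r ->
  tderivs n r (tshift k s L) = tshift k s (tderivs n r L).
Proof.
elim: r => //= j r IH; rewrite in_cons negb_or => /andP[kj kr].
by rewrite IH //; elim: (n j) => //= N ->; rewrite tderiv_tshift_neq // eq_sym.
Qed.

Lemma iter_tderivC j k N L : j != k ->
  teq (iter N (tderiv j) (tderiv k L)) (tderiv k (iter N (tderiv j) L)).
Proof. by move=> jk; elim: N => //= N ->; exact: tderivC. Qed.

Lemma tderivs_iter_tderiv n r k N L : k \notin r ->
  teq (tderivs n r (iter N (tderiv k) L)) (iter N (tderiv k) (tderivs n r L)).
Proof.
move=> kr; elim: N => //= N <-; elim: r kr => //= j r IH.
rewrite in_cons negb_or => /andP[kj kr].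
by rewrite IH // iter_tderivC // eq_sym.
Qed.

Lemma tderivs_tderiv n r k L : k \notin r ->
  teq (tderivs n r (tderiv k L)) (tderiv k (tderivs n r L)).
Proof. exact: (@tderivs_iter_tderiv n r k 1). Qed.

Lemma iter_tderiv_tscale k N c L :
  teq (iter N (tderiv k) (tscale c L)) (tscale c (iter N (tderiv k) L)).
Proof. by elim: N => //= N ->; exact: tderiv_tscale. Qed.

Lemma tderivs_tscale n r c L : teq (tderivs n r (tscale c L)) (tscale c (tderivs n r L)).
Proof. by elim: r => //= j r ->; exact: iter_tderiv_tscale. Qed.

Lemma tderivs_nsub n r k L : k \notin r -> tderivs (nsub n k) r L = tderivs n r L.
Proof.
elim: r => //= j r IH; rewrite in_cons negb_or => /andP[kj kr].
by rewrite IH // /nsub eq_sym (negbTE kj).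
Qed.

End MonomialSums.

Arguments teq {R d} L1 L2.

Section FixedCoordinate.
Variables (R : realType) (d : nat) (i : 'I_d).
Implicit Types (a : 'rV[R]_d) (c m s : R) (L v w : seq (mterm R d)) (k : nat).
Implicit Types (n : 'I_d -> nat) (r : seq 'I_d).
Local Notation D := (tderiv i).
Local Notation X := (tshift i).

Definition teuler L := X 1 (D L).

#[export] Instance teuler_teq : Morphisms.Proper (Morphisms.respectful teq teq) teuler.
Proof. by move=> L1 L2 E; rewrite /teuler E. Qed.

Lemma teuler_cat L1 L2 : teuler (L1 ++ L2) = teuler L1 ++ teuler L2.
Proof. by rewrite /teuler tderiv_cat tshift_cat. Qed.

Lemma teuler_tscale c L : teq (teuler (tscale c L)) (tscale c (teuler L)).
Proof. by rewrite /teuler tderiv_tscale tshift_tscale. Qed.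

Lemma iter_tderiv_tshift_succ k w :
  teq (iter k.+1 D (X k.+1%:R w)) (iter k D (X k%:R (teuler w ++ tscale k.+1%:R w))).
Proof.
rewrite iterSr tderiv_tshift teq_catC tshift_cat tshift_tshift tshift_tscale.
by rewrite -natr1 addrK addrC.
Qed.

Lemma teuler_iter_tderiv k w :
  teq (teuler (iter k D (X k%:R w))) (iter k D (X k%:R (teuler w))).
Proof.
move: w; elim: k => [|k IH] w; first by rewrite /teuler !mulr0n !tshift0.
rewrite !iter_tderiv_tshift_succ IH.
by rewrite teuler_cat teuler_tscale.
Qed.

Lemma tshift_iter_tderiv k v :
  teq (X 1 (iter k.+1 D (X k%:R v))) (iter k D (X k.+1%:R (D v))).
Proof.
by rewrite iterS -/(teuler _) teuler_iter_tderiv /teuler tshift_tshift addrC natr1.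
Qed.

Lemma tshift_tderiv_smono c a m s : a ord0 i = 0 ->
  teq (X s (D [:: MTerm c a m])) [:: MTerm (- (c * m)) (a + s *: evec R i) (m - 1)].
Proof. by move=> ai x _; rewrite /= !teval_cons /= ai /teval big_nil; ring. Qed.

Lemma tshift_iter_tderivs_smono n r k a m : i \notin r -> a ord0 i = k%:R ->
  teq (X 1 (iter k.+1 D (tderivs n r [:: MTerm 1 a m])))
      (tscale (- m) (iter k D (tderivs n r [:: MTerm 1 (a + evec R i) (m - 1)]))).
Proof.
move=> ir ai; set a0 := a - k%:R *: evec R i.
have -> : [:: MTerm 1 a m] = X k%:R [:: MTerm 1 a0 m] by rewrite /tshift /= subrK.
have a0i : a0 ord0 i = 0 by rewrite /a0 !mxE !eqxx /= ai mulr1 subrr.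
have a0E : a0 + k.+1%:R *: evec R i = a + evec R i.
  by rewrite /a0 -natr1 scalerDl scale1r addrA subrK.
rewrite tderivs_tshift // tshift_iter_tderiv -tderivs_tderiv // -tderivs_tshift //.
rewrite tshift_tderiv_smono // a0E mul1r.
by rewrite -iter_tderiv_tscale -tderivs_tscale /tscale /= mulr1.
Qed.

End FixedCoordinate.

Section SimplexJacobi.
Variables (R : realType) (d : nat).
Implicit Types (L : seq (mterm R d)) (gam a : 'rV[R]_d) (m : R) (x : 'rV[R]_d).
Implicit Types (n : 'I_d -> nat) (i : 'I_d).

Definition rown n : 'rV[R]_d := \row_j (n j)%:R.

Lemma Pjac_smono gam (gd1 : R) n x :
  Pjac gam gd1 n x =
  smono (- gam) (- gd1) x * partialn n (smono (gam + rown n) (gd1 + (absn n)%:R)) x.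
Proof.
rewrite /Pjac; have -> : jac_weight gam gd1 n = smono (gam + rown n) (gd1 + (absn n)%:R).
  by apply/funext => y; congr (_ * _); apply: eq_bigr => j _; rewrite !mxE.
by congr (_ * _ * _); apply: eq_bigr => j _; rewrite !mxE.
Qed.

Lemma rown_nsub n i : (0 < n i)%N -> rown (nsub n i) = rown n - evec R i.
Proof.
move=> ni; apply/rowP => j; rewrite !mxE !eqxx /= /nsub.
have [->|_] := eqVneq j i; last by rewrite subr0.
by rewrite -[in RHS](prednK ni) -natr1 addrK.
Qed.

Lemma absn_nsub n i : (0 < n i)%N -> (absn (nsub n i))%:R = (absn n)%:R - 1 :> R.
Proof.
move=> ni; rewrite /absn (bigD1 i) //= [in RHS](bigD1 i) //= /nsub eqxx.
rewrite (eq_bigr n) => [|j /negbTE -> //].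
by rewrite -{2}(prednK ni) addSn -natr1 addrK.
Qed.

Lemma tderivs_enum_split i : exists2 r, i \notin r &
  forall n L, teq (tderivs n (enum 'I_d) L) (iter (n i) (tderiv i) (tderivs n r L)).
Proof.
have i_enum : i \in enum 'I_d by rewrite mem_enum.
move: (enum_uniq 'I_d); case/splitPr: i_enum => r1 r2.
rewrite cat_uniq /= negb_or => /and3P[_ /andP[ir1 _] /andP[ir2 _]].
exists (r1 ++ r2); first by rewrite mem_cat negb_or ir1.
by move=> n L; rewrite !tderivs_cat /= tderivs_iter_tderiv.
Qed.

Lemma partialn_smono_succ n i k a m x :
  n i = k.+1 -> a ord0 i = k%:R -> in_interior x ->
  x ord0 i * partialn n (smono a m) x =
  - m * partialn (nsub n i) (smono (a + evec R i) (m - 1)) x.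
Proof.
move=> nik ai Ux; have [x_gt0 _] := Ux.
have [r ir enumE] := tderivs_enum_split i.
have smonoE (b : 'rV[R]_d) (c : R) y :
    in_interior y -> smono b c y = teval [:: MTerm 1 b c] y.
  by move=> _; rewrite teval_cons /teval big_nil mul1r addr0.
rewrite !(partialn_teval _ (smonoE _ _) Ux) !enumE // /nsub eqxx nik /=.
rewrite -/(nsub n i) tderivs_nsub //.
rewrite -[x ord0 i]powRr1 ?ltW // -teval_tshift // -teval_tscale.
exact: tshift_iter_tderivs_smono.
Qed.

End SimplexJacobi.

Theorem lemma4p2 (R : realType) (d : nat) (gam : 'rV[R]_d) (gd1 : R)
  (n : 'I_d -> nat) (i : 'I_d) :
  gam ord0 i = -1 -> (1 <= n i)%N ->
  forall x : 'rV[R]_d, in_interior x ->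
  Pjac gam gd1 n x =
  - ((absn n)%:R + gd1) * x ord0 i *
    Pjac (gam + 2%:R *: evec R i) gd1 (nsub n i) x.
Proof.
move=> gi ni x Ux; have [x_gt0 _] := Ux.
have [k nik] : exists k, n i = k.+1 by exists (n i).-1; rewrite prednK.
set a := gam + rown R n; set m := gd1 + (absn n)%:R.
have ai : a ord0 i = k%:R by rewrite !mxE gi nik -natr1 addrC addrK.
have key := partialn_smono_succ m nik ai Ux.
rewrite !Pjac_smono rown_nsub ?absn_nsub // -/a -/m.
have -> : gam + 2%:R *: evec R i + (rown R n - evec R i) = a + evec R i.
  by apply/rowP => j; rewrite !mxE; ring.
have -> : gd1 + ((absn n)%:R - 1) = m - 1 by rewrite addrA.
have -> : - (gam + 2%:R *: evec R i) = - gam + (- 2%:R) *: evec R i.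
  by rewrite opprD scaleNr.
rewrite smono_shift // powRN powR_mulrn ?ltW //.
have xi_neq0 : x ord0 i != 0 by rewrite gt_eqF.
apply: (mulfI xi_neq0); rewrite mulrCA key /m; by field.
Qed.
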